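(* Let $g$, $\mathbf{g}=g^{\oplus n}$ be as in the context, and let $\mathbf{A},\mathbf{B},\mathbf{C},\mathbf{D}$ be linear operators on $\mathbf{g}$ with components $A_{ij},B_{ij},C_{ij},D_{ij}$ such that $A_{ij}^*=-A_{ji}$, $D_{ij}^*=-D_{ji}$, $B_{ij}^*=C_{ji}$ and such that PB$(\mathbf{A},\mathbf{B},\mathbf{C},\mathbf{D})$ is a Poisson bracket on $\mathbf{g}$. All subscripts are taken mod $n$. Suppose (i) $A_{i+1,j+1}=-B_{i+1,j}=C_{i,j+1}=-D_{i,j}$ for all $i\neq j$; (ii) $A_{j+1,j+1}-D_{j,j}+B_{j+1,j}-C_{j,j+1}=0$ for all $1\le j\le n$. Let $\sigma:\mathbf{g}\to\mathbf{g}$, $\sigma(u_1,\dots,u_n)=(u_2,\dots,u_n,u_1)$, let $\mathcal{M}(u_1,\dots,u_n)=u_n\cdots u_1$, and $T_j=u_j\cdots u_1\cdot u_n\cdots u_{j+1}$ (so $\mathcal{M}\circ\sigma^j(\mathbf{u})=T_j$, $T_0=T_n=\mathcal{M}(\mathbf{u})$). Then: (1) for each $j$, the map $\mathcal{M}\circ\sigma^j:\mathbf{g}\to g$ is Poisson when $g$ carries the bracket PB$(A_{j+1,j+1},B_{j+1,j},C_{j,j+1},D_{j,j})$, i.e. $\{\varphi\circ\mathcal{M}\circ\sigma^j,\psi\circ\mathcal{M}\circ\sigma^j\}_{\mathbf{g}}=\{\varphi,\psi\}_g\circ\mathcal{M}\circ\sigma^j$ for all smooth $\varphi,\psi$ on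 $g$; (2) for every smooth Ad-invariant $\varphi$ on $g$, the Hamiltonian equations on $\mathbf{g}$ generated by $\Phi(\mathbf{u})=\varphi(u_n\cdots u_1)$ are $\dot u_j=u_j\,\mathcal{L}_{j-1}-\mathcal{L}_j\,u_j$ with $\mathcal{L}_j=R_j(d\varphi(T_j))$, where $R_j=A_{j+1,j+1}+B_{j+1,j}=D_{j,j}+C_{j,j+1}$.
   Context: $g$ is an associative algebra with a nondegenerate symmetric bilinear form $\langle\cdot,\cdot\rangle$ with $\langle uv,w\rangle=\langle u,vw\rangle$; $X^*$ denotes the adjoint of a linear operator on $g$. For smooth $\varphi$ on $g$, $\nabla\varphi(u)$ is defined by $\langle\nabla\varphi(u),X\rangle=\frac{d}{d\varepsilon}\varphi(u+\varepsilon X)|_{\varepsilon=0}$, $d\varphi(u)=u\nabla\varphi(u)$, $d'\varphi(u)=\nabla\varphi(u)u$; $\varphi$ is Ad-invariant if $\varphi(huh^{-1})=\varphi(u)$ (then $d\varphi=d'\varphi$). For linear operators $A,B,C,D$ on $g$, PB$(A,B,C,D)$ is $\{\varphi,\psi\}(u)=\langle A(d'\varphi),d'\psi\rangle-\langle D(d\varphi),d\psi\rangle+\langle B(d\varphi),d'\psi\rangle-\langle C(d'\varphi),d\psi\rangle$. $\mathbf{g}=g\oplus\cdots\oplus g$ ($n$ copies), componentwise multiplication, form $\langle\langle\mathbf{u},\mathbf{v}\rangle\rangle=\sum_k\langle u_k,v_k\rangle$; operator components $(\mathbf{A}(\mathbf{u}))_i=\sum_jA_{ij}(u_j)$. For smooth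 $\Phi$ on $\mathbf{g}$, $\nabla_j\Phi$ is the $j$-th gradient component, $d_j\Phi=u_j\nabla_j\Phi$, $d'_j\Phi=\nabla_j\Phi\,u_j$, and PB$(\mathbf{A},\mathbf{B},\mathbf{C},\mathbf{D})$ is $\{\Phi,\Psi\}=\sum_{i,j}\big(\langle A_{ij}(d'_j\Phi),d'_i\Psi\rangle-\langle D_{ij}(d_j\Phi),d_i\Psi\rangle+\langle B_{ij}(d_j\Phi),d'_i\Psi\rangle-\langle C_{ij}(d'_j\Phi),d_i\Psi\rangle\big)$. Hamiltonian equations generated by $\Phi$: $\frac{d}{dt}\ell(\mathbf{u})=\{\Phi,\ell\}(\mathbf{u})$ for all linear functions $\ell$. *)

From HB Require Import structures.
From mathcomp Require Import all_boot all_order all_algebra.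
From mathcomp Require Import all_classical all_reals all_analysis.
Set Implicit Arguments. Unset Strict Implicit. Unset Printing Implicit Defensive.
Import Order.TTheory GRing.Theory Num.Theory.
Local Open Scope ring_scope.
Local Open Scope classical_set_scope.

Section Defs.
Context {R : realType}.

(* C^k functions via continuous iterated directional derivatives (on a
   finite-dimensional space this is the usual C^k). *)
Fixpoint Ck {V : normedModType R} (k : nat) (f : V -> R) : Prop :=
  match k with
  | 0 => continuous (f : V -> R^o)
  | k'.+1 => [/\ continuous (f : V -> R^o), (forall x v, derivable (f : V -> R^o) x v)
                & forall v, Ck k' (fun x => 'D_v (f : V -> R^o) x)]
  end.

Definition smooth {V : normedModType R} (f : V -> R) : Prop := forall k, Ck k f.

Definition grad {V : normedModType R} (B : V -> V -> R) (f : V -> R) (u : V) : V :=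
  xget 0 [set y | forall X, B y X = 'D_X (f : V -> R^o) u].

Definition frobenius_setting (m : nat) (mul : 'rV[R]_m -> 'rV[R]_m -> 'rV[R]_m)
  (one : 'rV[R]_m) (form : 'rV[R]_m -> 'rV[R]_m -> R) : Prop :=
  (forall u v w, mul u (mul v w) = mul (mul u v) w) /\
  (forall u, mul one u = u /\ mul u one = u) /\
  (forall a u v w, mul (a *: u + v) w = a *: mul u w + mul v w) /\
  (forall a u v w, mul w (a *: u + v) = a *: mul w u + mul w v) /\
  (forall a u v w, form (a *: u + v) w = a * form u w + form v w) /\
  (forall u v, form u v = form v u) /\
  (forall u, (forall v, form u v = 0) -> u = 0) /\
  (forall u v w, form (mul u v) w = form u (mul v w)).

Definition is_adjoint (m : nat) (form : 'rV[R]_m -> 'rV[R]_m -> R)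
  (X Y : 'rV[R]_m -> 'rV[R]_m) : Prop :=
  forall u v, form (X u) v = form u (Y v).

Definition Ad_invariant (m : nat) (mul : 'rV[R]_m -> 'rV[R]_m -> 'rV[R]_m)
  (one : 'rV[R]_m) (phi : 'rV[R]_m -> R) : Prop :=
  forall u h h', mul h h' = one -> mul h' h = one -> phi (mul (mul h u) h') = phi u.

Definition PB (m : nat) (mul : 'rV[R]_m -> 'rV[R]_m -> 'rV[R]_m)
  (form : 'rV[R]_m -> 'rV[R]_m -> R) (A B C D : 'rV[R]_m -> 'rV[R]_m)
  (phi psi : 'rV[R]_m -> R) (u : 'rV[R]_m) : R :=
  let dphi := mul u (grad form phi u) in let d'phi := mul (grad form phi u) u in
  let dpsi := mul u (grad form psi u) in let d'psi := mul (grad form psi u) u in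
  form (A d'phi) d'psi - form (D dphi) dpsi + form (B dphi) d'psi
  - form (C d'phi) dpsi.

Definition formn (n m : nat) (form : 'rV[R]_m -> 'rV[R]_m -> R)
  (U V : 'M[R]_(n, m)) : R := \sum_(k < n) form (row k U) (row k V).

Definition PBn (n m : nat) (mul : 'rV[R]_m -> 'rV[R]_m -> 'rV[R]_m)
  (form : 'rV[R]_m -> 'rV[R]_m -> R)
  (A B C D : 'I_n -> 'I_n -> 'rV[R]_m -> 'rV[R]_m)
  (Phi Psi : 'M[R]_(n, m) -> R) (U : 'M[R]_(n, m)) : R :=
  let gPhi := grad (formn form) Phi U in let gPsi := grad (formn form) Psi U in
  let d j := mul (row j U) (row j gPhi) in let d' j := mul (row j gPhi) (row j U) in
  let e j := mul (row j U) (row j gPsi) in let e' j := mul (row j gPsi) (row j U) in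
  \sum_(i < n) \sum_(j < n)
    (form (A i j (d' j)) (e' i) - form (D i j (d j)) (e i)
     + form (B i j (d j)) (e' i) - form (C i j (d' j)) (e i)).

Definition is_Poisson {V : normedModType R}
  (br : (V -> R) -> (V -> R) -> V -> R) : Prop :=
  forall f g h, smooth f -> smooth g -> smooth h ->
   [/\ (forall x, br f g x = - br g f x),
       (forall x, br f (fun y => g y * h y) x = br f g x * h x + g x * br f h x)
     & (forall x, br f (br g h) x + br g (br h f) x + br h (br f g) x = 0)].

Definition sigma (n m : nat) (U : 'M[R]_(n, m)) : 'M[R]_(n, m) :=
  \matrix_(k < n, l < m) U (ordS k) l.

(* M(u_1,...,u_n) = u_n ... u_1 *)
Definition Mprod (n m : nat) (mul : 'rV[R]_m -> 'rV[R]_m -> 'rV[R]_m)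
  (one : 'rV[R]_m) (U : 'M[R]_(n, m)) : 'rV[R]_m :=
  foldr (fun k acc => mul acc (row k U)) one (enum 'I_n).

End Defs.

(* Write Phi = phi o M o sigma^(j+1) and T_j = M(sigma^(j+1) u).  In the
   product u_(j+1) ... u_n u_1 ... u_j, perturbing the factor u_k on the left,
   u_k + h Z u_k, has the same effect as perturbing its left neighbour u_(k+1)
   on the right, u_(k+1) + h u_(k+1) Z; pairing with Z this gives
   d'_(k+1) Phi = d_k Phi for every k except at the seam k = j, where instead
   d_j Phi = d phi(T_j) and d'_(j+1) Phi = d' phi(T_j).  Substituted into
   PB(A,B,C,D) and reindexed, hypotheses (i) and (ii) cancel every term except
   the (j, j) one, which is the bracket PB(A_(j+1,j+1), B_(j+1,j), C_(j,j+1),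
   D_(j,j)) at T_j.  For Ad-invariant phi, phi(PQ) = phi(QP) (conjugate by an
   invertible perturbation of Q and pass to the limit), so phi o M is
   sigma-invariant and d phi = d' phi; then d'_(k+1) Phi = d_k Phi for all k and
   the same cancellation leaves << grad l, (u_j L_(j-1) - L_j u_j)_j >>. *)

From HB Require Import structures.
From mathcomp Require Import all_boot all_order all_algebra.
From mathcomp Require Import all_classical all_reals all_analysis.
From mathcomp Require Import ring lra.
Import Order.TTheory GRing.Theory Num.Theory numFieldNormedType.Exports.
Set Implicit Arguments. Unset Strict Implicit. Unset Printing Implicit Defensive.
Local Open Scope ring_scope.
Local Open Scope classical_set_scope.

Section LinearMaps.
Variable R : realType.

Lemma linear_morph (U V : lmodType R) (f : U -> V) : linear f ->
  [/\ f 0 = 0, {morph f : x y / x + y} & forall a, {morph f : x / a *: x}].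
Proof.
move=> hf; pose fL : {linear U -> V} := HB.pack f (GRing.isLinear.Build _ _ _ _ f hf).
by split; [exact: (linear0 fL) | exact: (linearD fL) | exact: (linearZZ fL)].
Qed.

Lemma linear_fun_sum (U V : lmodType R) (f : U -> V) (I : Type) (r : seq I)
    (F : I -> U) :
  linear f -> f (\sum_(i <- r) F i) = \sum_(i <- r) f (F i).
Proof. by case/linear_morph=> f0 fD _; apply: (big_morph f fD f0). Qed.

Lemma continuous_sum (T : topologicalType) (V : normedModType R) (I : Type)
    (r : seq I) (f : I -> T -> V) :
  (forall i, continuous (f i)) -> continuous (fun x => \sum_(i <- r) f i x).
Proof. by move=> fc; apply: continuous_big => //; exact: add_continuous. Qed.

Variables (p q : nat).

Lemma linear_mx_expand (V : lmodType R) (f : 'M[R]_(p, q) -> V) : linear f ->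
  forall N, f N = \sum_(i < p) \sum_(j < q) N i j *: f (delta_mx i j).
Proof.
move=> hf N; rewrite {1}(matrix_sum_delta N) (linear_fun_sum _ _ hf).
apply: eq_bigr => i _; rewrite (linear_fun_sum _ _ hf); apply: eq_bigr => j _.
by case: (linear_morph hf) => _ _ ->.
Qed.

Lemma linear_mx_continuous (V : normedModType R) (f : 'M[R]_(p, q) -> V) :
  linear f -> continuous f.
Proof.
move=> hf; have -> : f = fun N => \sum_(i < p) \sum_(j < q) N i j *: f (delta_mx i j).
  by apply: funext => N; apply: linear_mx_expand.
apply: continuous_sum => i; apply: continuous_sum => j x.
by apply: continuousZr_tmp; exact: coord_continuous.
Qed.

Lemma linear_mx_differentiable (V : normedModType R) (f : 'M[R]_(p, q) -> V) x :
  linear f -> differentiable f x.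
Proof.
move=> hf; pose fL : {linear 'M[R]_(p, q) -> V} := HB.pack f (GRing.isLinear.Build _ _ _ _ f hf).
exact: (@linear_differentiable _ _ _ fL x (linear_mx_continuous hf)).
Qed.

Lemma linear_mx_derive (f : 'M[R]_(p, q) -> R^o) U X : linear f -> 'D_X f U = f X.
Proof.
move=> hf; pose fL : {linear 'M[R]_(p, q) -> R^o} := HB.pack f (GRing.isLinear.Build _ _ _ _ f hf).
rewrite deriveE; last exact: linear_mx_differentiable.
by rewrite (@diff_lin _ _ _ fL) //; exact: linear_mx_continuous.
Qed.

End LinearMaps.

Section Increments.
Variable R : realType.

Lemma is_derive_along_line (V W : normedModType R) (f : V -> W) (x v : V) (s : R) :
  derivable f (s *: v + x) v ->
  is_derive s 1 (fun t : R => f (t *: v + x)) ('D_v f (s *: v + x)).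
Proof.
move=> hd.
have E : (fun h : R => h^-1 *: (((fun t : R => f (t *: v + x)) \o shift s) (h *: 1)
            - f (s *: v + x)))
       = (fun h : R => h^-1 *: ((f \o shift (s *: v + x)) (h *: v) - f (s *: v + x))).
  by apply: funext => h /=; rewrite [h *: 1]mulr1 scalerDl addrA.
by split; [rewrite /derivable E | rewrite /derive E].
Qed.

Lemma derive_line_ext (V V' W : normedModType R) (f : V -> W)
    (g : V' -> W) a v b w :
  (forall h : R, f (h *: v + a) = g (h *: w + b)) -> 'D_v f a = 'D_w g b.
Proof.
move=> fg; have fg0 := fg 0; rewrite !scale0r !add0r in fg0.
have E : (fun h : R => h^-1 *: ((f \o shift a) (h *: v) - f a)) =
         (fun h : R => h^-1 *: ((g \o shift b) (h *: w) - g b)).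
  by apply: funext => h /=; rewrite fg fg0.
by rewrite /derive E.
Qed.

Lemma MVT_from0 (g dg : R -> R) (t : R) : (forall s : R, is_derive s (1 : R) g (dg s)) ->
  exists2 c, `|c| <= `|t| & g t - g 0 = t * dg c.
Proof.
move=> hd.
have gc (a b : R) : {within `[a, b], continuous g}.
  apply: continuous_subspaceT => s.
  by apply: differentiable_continuous; apply/derivable1_diffP; case: (hd s).
have [t0|t0] := leP 0 t.
  have [c] := MVT_segment t0 (fun s _ => hd s) (gc _ _).
  rewrite in_itv /= => /andP[c0 ct] E.
  by exists c; [rewrite !ger0_norm | rewrite E subr0 mulrC].
have [c] := MVT_segment (ltW t0) (fun s _ => hd s) (gc _ _).
rewrite in_itv /= => /andP[tc c0] E.
exists c; first by rewrite !ler0_norm ?lerN2 // ltW.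
by rewrite -opprB E sub0r mulrN opprK mulrC.
Qed.

Lemma mx_entry_le_norm a b (M : 'M[R]_(a, b)) i j : `|M i j| <= `|M|.
Proof.
rewrite [leRHS]/Num.Def.normr /= mx_normrE.
exact: (le_bigmax _ (fun ij : 'I_a * 'I_b => `|M ij.1 ij.2|) (i, j)).
Qed.

Lemma mx_norm_le_entries a b (M : 'M[R]_(a, b)) r :
  0 <= r -> (forall i j, `|M i j| <= r) -> `|M| <= r.
Proof.
move=> r0 h; rewrite [leLHS]/Num.Def.normr /= mx_normrE.
by apply: bigmax_le => // -[i j] _; apply: h.
Qed.

Variables (m : nat) (h : 'rV[R]_m).

Definition head_row (j : nat) : 'rV[R]_m := \row_i (if (i < j)%N then h 0 i else 0).

Lemma head_row0 : head_row 0 = 0.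
Proof. by apply/rowP => i; rewrite !mxE. Qed.

Lemma head_row_full : head_row m = h.
Proof. by apply/rowP => i; rewrite !mxE ltn_ord. Qed.

Lemma head_rowS (k : 'I_m) : head_row k.+1 = h 0 k *: 'e_k + head_row k.
Proof.
apply/rowP => i; rewrite !mxE /=.
case: (ltngtP i k) => [ik|ki|ik].
- rewrite ltnS (ltnW ik); case: eqP => [e|_]; last by rewrite mulr0 add0r.
  by move: ik; rewrite e ltnn.
- rewrite ltnS leqNgt ki /=; case: eqP => [e|_]; last by rewrite mulr0 addr0.
  by move: ki; rewrite e ltnn.
- have -> : i = k by apply: val_inj.
  by rewrite ltnSn eqxx mulr1 addr0.
Qed.

Lemma norm_head_row_shift (k : 'I_m) c :
  `|c| <= `|h 0 k| -> `|c *: 'e_k + head_row k| <= `|h|.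
Proof.
move=> ck; apply: mx_norm_le_entries => // i j; rewrite !mxE ord1 /=.
case: (j =P k) => [->|_].
  by rewrite ltnn /= mulr1 addr0; exact: le_trans ck (mx_entry_le_norm _ _ _).
rewrite mulr0 add0r; case: ifP => _; [exact: mx_entry_le_norm | by rewrite normr0].
Qed.

End Increments.

Section C1Differentiable.
Variables (R : realType) (m : nat) (phi : 'rV[R]_m -> R^o).

(* Walk from p to h + p one coordinate at a time and apply the mean value
   theorem on each segment. *)
Lemma C1_increment_bound (p h : 'rV[R]_m) (e : R) :
  (forall x v, derivable phi x v) ->
  (forall x, `|x - p| <= `|h| -> forall k : 'I_m, `|'D_('e_k) phi x - 'D_('e_k) phi p| <= e) ->
  `|phi (h + p) - phi p - \sum_(k < m) h 0 k * 'D_('e_k) phi p| <= m%:R * (e * `|h|).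
Proof.
move=> hd hc; pose q (j : nat) := head_row h j + p.
have telescope : phi (h + p) - phi p = \sum_(k < m) (phi (q k.+1) - phi (q k)).
  rewrite -(big_mkord xpredT (fun k => phi (q k.+1) - phi (q k))) telescope_sumr //.
  by rewrite /q head_row_full head_row0 add0r.
rewrite telescope -sumrB; apply: le_trans (ler_norm_sum _ _ _) _.
rewrite (_ : _ * _ = \sum_(k < m) (e * `|h|)); last by rewrite sumr_const card_ord mulr_natl.
apply: ler_sum => k _.
rewrite (_ : q k.+1 = h 0 k *: 'e_k + q k); last by rewrite /q head_rowS addrA.
have [c ck] := MVT_from0 (h 0 k) (fun s => is_derive_along_line (hd (s *: 'e_k + q k) 'e_k)).
rewrite scale0r add0r => ->; rewrite -mulrBr normrM mulrC ler_pM //.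
  by apply: hc; rewrite addrA addrK norm_head_row_shift.
exact: mx_entry_le_norm.
Qed.

Lemma Ck1_differentiable p : Ck 1 phi -> differentiable phi p.
Proof.
case=> _ hd hD.
pose L (h : 'rV[R]_m) : R^o := \sum_(k < m) h 0 k * 'D_('e_k) phi p.
have Llin : linear L.
  move=> a u v; rewrite /L scaler_sumr -big_split; apply: eq_bigr => k _.
  by rewrite !mxE /= mulrDl -mulrA.
pose fL : {linear 'rV[R]_m -> R^o} := HB.pack L (GRing.isLinear.Build _ _ _ _ L Llin).
have Lc : continuous fL := linear_mx_continuous Llin.
have est : phi \o shift p = cst (phi p) + (fL : 'rV[R]_m -> R^o) +o_ (0 : 'rV[R]_m) id.
  apply/eqaddoP => e e0.
  have e'0 : 0 < e / (m%:R + 1) by rewrite divr_gt0 // ltr_wpDl.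
  have near_p (k : 'I_m) : \forall x \near p,
      `|'D_('e_k) phi p - 'D_('e_k) phi x| <= e / (m%:R + 1).
    by have /(_ p)/cvgrPdist_le/(_ _ e'0) := hD 'e_k.
  have [d d0 Hd] := (nbhs_ballP _ _).1 (filter_forall _ near_p).
  near=> h.
  have hlt : `|h| < d by near: h; exact: (@pseudometric_normed_Zmodule.nbhs0_lt R 'rV[R]_m d d0).
  rewrite /= opprD addrA; apply: le_trans (C1_increment_bound hd _) _.
    move=> x hx k; rewrite distrC; apply: (Hd x).
    by rewrite -ball_normE /= distrC; exact: le_lt_trans hx hlt.
  rewrite mulrA ler_wpM2r // mulrCA ler_piMr //; first exact: ltW.
  by rewrite ler_pdivrMr ?ltr_wpDl // mul1r lerDl.
Unshelve. all: try by end_near.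
have dE := diff_unique Lc est.
by apply/diff_locallyP; rewrite dE; split.
Qed.

End C1Differentiable.

Lemma gradP (R : realType) (V : normedModType R) (B : V -> V -> R) (f : V -> R) u :
  (exists y, forall X, B y X = 'D_X (f : V -> R^o) u) ->
  forall X, B (grad B f u) X = 'D_X (f : V -> R^o) u.
Proof. by move=> ex; have := xgetPex 0 ex. Qed.

Lemma trivial_left_kernel_unitmx (F : fieldType) k (M : 'M[F]_k) :
  (forall v : 'rV[F]_k, v *m M = 0 -> v = 0) -> M \in unitmx.
Proof.
move=> H; rewrite -row_free_unit -kermx_eq0; apply/eqP/row_matrixP => i.
by rewrite row0; apply: H; rewrite -row_mul mulmx_ker row0.
Qed.

Section FrobeniusAlgebra.
Variables (R : realType) (m : nat) (mul : 'rV[R]_m -> 'rV[R]_m -> 'rV[R]_m)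
  (one : 'rV[R]_m) (form : 'rV[R]_m -> 'rV[R]_m -> R).
Hypothesis hF : frobenius_setting mul one form.

Lemma amulA u v w : mul u (mul v w) = mul (mul u v) w.
Proof. by case: hF. Qed.
Lemma amul1l u : mul one u = u.
Proof. by case: hF => _ [h _]; case: (h u). Qed.
Lemma amul1r u : mul u one = u.
Proof. by case: hF => _ [h _]; case: (h u). Qed.
Lemma amulPl w : linear (mul^~ w).
Proof. by case: hF => _ [_ [h _]] a u v; apply: h. Qed.
Lemma amulPr w : linear (mul w).
Proof. by case: hF => _ [_ [_ [h _]]] a u v; apply: h. Qed.
Lemma iformPl w : linear (form^~ w : _ -> R^o).
Proof. by case: hF => _ [_ [_ [_ [h _]]]] a u v; apply: h. Qed.
Lemma iformC u v : form u v = form v u.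
Proof. by case: hF => _ [_ [_ [_ [_ [h _]]]]]. Qed.
Lemma iform_nondeg u : (forall v, form u v = 0) -> u = 0.
Proof. by case: hF => _ [_ [_ [_ [_ [_ [h _]]]]]]; apply: h. Qed.
Lemma iform_mul u v w : form (mul u v) w = form u (mul v w).
Proof. by case: hF => _ [_ [_ [_ [_ [_ [_ h]]]]]]. Qed.

Lemma amulDl u v w : mul (u + v) w = mul u w + mul v w.
Proof. by case: (linear_morph (amulPl w)) => _ ->. Qed.
Lemma amulZl a u w : mul (a *: u) w = a *: mul u w.
Proof. by case: (linear_morph (amulPl w)) => _ _ ->. Qed.
Lemma amulBl u v w : mul (u - v) w = mul u w - mul v w.
Proof. by rewrite amulDl -scaleN1r amulZl scaleN1r. Qed.
Lemma amul0r w : mul w 0 = 0.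
Proof. by case: (linear_morph (amulPr w)). Qed.
Lemma amulDr u v w : mul w (u + v) = mul w u + mul w v.
Proof. by case: (linear_morph (amulPr w)) => _ ->. Qed.
Lemma amulZr a u w : mul w (a *: u) = a *: mul w u.
Proof. by case: (linear_morph (amulPr w)) => _ _ ->. Qed.
Lemma amulBr u v w : mul w (u - v) = mul w u - mul w v.
Proof. by rewrite amulDr -scaleN1r amulZr scaleN1r. Qed.

Lemma iform0l w : form 0 w = 0.
Proof. by case: (linear_morph (iformPl w)). Qed.
Lemma iformDl u v w : form (u + v) w = form u w + form v w.
Proof. by case: (linear_morph (iformPl w)) => _ ->. Qed.
Lemma iformZl a u w : form (a *: u) w = a * form u w.
Proof. by case: (linear_morph (iformPl w)) => _ _ ->. Qed.
Lemma iformNl u w : form (- u) w = - form u w.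
Proof. by rewrite -scaleN1r iformZl mulN1r. Qed.
Lemma iformBl u v w : form (u - v) w = form u w - form v w.
Proof. by rewrite iformDl iformNl. Qed.
Lemma iformBr u v w : form w (u - v) = form w u - form w v.
Proof. by rewrite !(iformC w) iformBl. Qed.

Lemma iform_mulC u v w : form u (mul v w) = form (mul w u) v.
Proof. by rewrite iformC iform_mul iformC. Qed.

Lemma iform_inj u v : (forall w, form u w = form v w) -> u = v.
Proof.
move=> H; apply/eqP; rewrite -subr_eq0; apply/eqP/iform_nondeg => w.
by rewrite iformBl H subrr.
Qed.

Lemma amul_continuous : continuous (fun p : 'rV[R]_m * 'rV[R]_m => mul p.1 p.2).
Proof.
have -> : (fun p : 'rV[R]_m * 'rV[R]_m => mul p.1 p.2) = fun p =>
    \sum_(a < m) \sum_(b < m) (p.1 0 a * p.2 0 b) *: mul 'e_a 'e_b.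
  apply: funext => -[u v] /=.
  rewrite {1}(row_sum_delta u) (linear_fun_sum _ _ (amulPl v)); apply: eq_bigr => a _.
  rewrite amulZl {1}(row_sum_delta v) (linear_fun_sum _ _ (amulPr _)) scaler_sumr.
  by apply: eq_bigr => b _; rewrite amulZr scalerA.
apply: continuous_sum => a; apply: continuous_sum => b x.
apply: (@continuousZr_tmp R _ _ (fun z : 'rV[R]_m * 'rV[R]_m => z.1 0 a * z.2 0 b)).
apply: continuousM.
  by apply: (@continuous_comp _ _ _ fst (fun u : 'rV[R]_m => u 0 a));
    [exact: cvg_fst | exact: coord_continuous].
by apply: (@continuous_comp _ _ _ snd (fun u : 'rV[R]_m => u 0 b));
  [exact: cvg_snd | exact: coord_continuous].
Qed.

Lemma amul_differentiable (p : 'rV[R]_m * 'rV[R]_m) :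
  differentiable (fun p : 'rV[R]_m * 'rV[R]_m => mul p.1 p.2) p.
Proof.
have bl : bilinear_for (GRing.Scale.Law.clone _ _ *:%R _)
    (GRing.Scale.Law.clone _ _ *:%R _) mul.
  by split=> [u|u] a x y /=; rewrite ?amulPl ?amulPr.
pose mB : {bilinear 'rV[R]_m -> 'rV[R]_m -> 'rV[R]_m} :=
  HB.pack mul (bilinear_isBilinear.Build _ _ _ _ _ _ mul bl).
exact: (@differentiable_bilin _ _ _ _ mB p amul_continuous).
Qed.

Lemma foldr_amul_rows_differentiable n (s : seq 'I_n) (V : 'M[R]_(n, m)) :
  differentiable (fun V : 'M[R]_(n, m) => foldr (fun k acc => mul acc (row k V)) one s) V.
Proof.
elim: s => [|k s IH] /=; first exact: differentiable_cst.
apply: (@differentiable_comp _ _ _ _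
  (fun V : 'M[R]_(n, m) => (foldr (fun k acc => mul acc (row k V)) one s, row k V))
  (fun p : 'rV[R]_m * 'rV[R]_m => mul p.1 p.2)); last exact: amul_differentiable.
apply: differentiable_pair => //.
by apply: linear_mx_differentiable => a u v; rewrite linearP.
Qed.

Definition gram : 'M[R]_m := \matrix_(a, b) form 'e_a 'e_b.

Lemma iform_expandl v w : form v w = \sum_(a < m) v 0 a * form 'e_a w.
Proof.
rewrite {1}(row_sum_delta v) (linear_fun_sum _ _ (iformPl w)).
by apply: eq_bigr => b _; rewrite iformZl.
Qed.

Lemma iform_expandr v w : form v w = \sum_(b < m) w 0 b * form v 'e_b.
Proof. by rewrite iformC iform_expandl; apply: eq_bigr => b _; rewrite iformC. Qed.

Lemma gram_unitmx : gram \in unitmx.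
Proof.
apply: trivial_left_kernel_unitmx => v hv; apply: iform_nondeg => w.
rewrite iform_expandr big1 // => b _.
suff -> : form v 'e_b = 0 by rewrite mulr0.
have : (v *m gram) 0 b = 0 by rewrite hv mxE.
rewrite mxE iform_expandl => E; rewrite -[RHS]E.
by apply: eq_bigr => a _; rewrite !mxE.
Qed.

Definition riesz (l : 'rV[R]_m -> R) : 'rV[R]_m := (\row_b l 'e_b) *m invmx gram.

Lemma rieszP (l : 'rV[R]_m -> R^o) : linear l -> forall X, form (riesz l) X = l X.
Proof.
move=> hl X; rewrite iform_expandr {2}(row_sum_delta X) (linear_fun_sum _ _ hl).
apply: eq_bigr => b _; case: (linear_morph hl) => _ _ ->; congr (_ * _).
have <- : (riesz l *m gram) 0 b = l 'e_b by rewrite /riesz mulmxKV ?gram_unitmx // mxE.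
by rewrite mxE iform_expandl; apply: eq_bigr => a _; rewrite !mxE.
Qed.

Lemma iform_grad (phi : 'rV[R]_m -> R) u : Ck 1 phi ->
  forall X, form (grad form phi u) X = 'D_X (phi : _ -> R^o) u.
Proof.
move=> c1; apply: gradP; exists (riesz ('d (phi : _ -> R^o) u)) => X.
have d := Ck1_differentiable u c1.
by rewrite rieszP ?deriveE // => a x y; rewrite linearP.
Qed.

End FrobeniusAlgebra.

Section RowMatrices.
Variables (R : realType) (n m : nat).

Definition single_row (k : 'I_n) (x : 'rV[R]_m) : 'M[R]_(n, m) :=
  \matrix_(i, j) (if i == k then x 0 j else 0).

Lemma row_single_row (k i : 'I_n) x : row i (single_row k x) = if i == k then x else 0.
Proof. by apply/rowP => j; rewrite !mxE; case: ifP => _; rewrite ?mxE. Qed.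

Lemma single_rowP (k : 'I_n) : linear (single_row k).
Proof.
move=> a x y; apply/matrixP => i j; rewrite !mxE.
by case: ifP => _; rewrite ?mxE ?mulr0 ?addr0.
Qed.

Lemma sum_single_row (X : 'M[R]_(n, m)) : \sum_(k < n) single_row k (row k X) = X.
Proof.
apply/matrixP => i j; rewrite summxE (bigD1 i) //= !mxE eqxx big1 ?addr0 //.
by move=> k ki; rewrite !mxE eq_sym (negbTE ki).
Qed.

Lemma sigmaP : linear (@sigma R n m).
Proof. by move=> a X Y; apply/matrixP => i j; rewrite !mxE. Qed.

Lemma iter_sigmaP r : linear (iter r (@sigma R n m)).
Proof. by elim: r => [|r IH] a X Y //=; rewrite IH sigmaP. Qed.

Lemma row_iter_sigma r (V : 'M[R]_(n, m)) k :
  row k (iter r (@sigma R n m) V) = row (iter r (@ordS n) k) V.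
Proof.
elim: r k => [|r IH] k //=.
have -> : row k (sigma (iter r (@sigma R n m) V)) = row (ordS k) (iter r (@sigma R n m) V).
  by apply/rowP => j; rewrite !mxE.
by rewrite IH -iterSr.
Qed.

Lemma iter_ordS_inj r : injective (iter r (@ordS n)).
Proof. by elim: r => [|r IH] //= x y /ordS_inj /IH. Qed.

Lemma iter_ordS_pred r : cancel (iter r (@ord_pred n)) (iter r (@ordS n)).
Proof.
elim: r => [|r IH] // k.
by rewrite [iter r.+1 _ k]iterS [iter r.+1 (@ordS n) _]iterSr ord_predK IH.
Qed.

Lemma val_iter_ordS r (k : 'I_n) : val (iter r (@ordS n) k) = ((k + r) %% n)%N.
Proof.
elim: r => [|r IH] /=; first by rewrite addn0 modn_small.
by rewrite IH addnS -addn1 modnDml addn1.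
Qed.

Lemma iter_sigma_single_row r (i k : 'I_n) (x : 'rV[R]_m) :
  iter r (@ordS n) i = k -> iter r (@sigma R n m) (single_row k x) = single_row i x.
Proof.
move=> <-; apply/row_matrixP => j; rewrite row_iter_sigma !row_single_row.
by rewrite (inj_eq (@iter_ordS_inj r)).
Qed.

Definition rows (V : 'M[R]_(n, m)) : seq 'rV[R]_m := map (fun k => row k V) (enum 'I_n).

Lemma size_rows (V : 'M[R]_(n, m)) : size (rows V) = n.
Proof. by rewrite size_map size_enum_ord. Qed.

Lemma nth_rows (V : 'M[R]_(n, m)) (k : 'I_n) : nth 0 (rows V) k = row k V.
Proof.
rewrite /rows (nth_map k); last by rewrite size_enum_ord.
by congr row; apply: val_inj; rewrite /= nth_enum_ord.
Qed.

Lemma rows_single_row (V : 'M[R]_(n, m)) (k : 'I_n) h x :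
  rows (h *: single_row k x + V) = set_nth 0 (rows V) k (row k V + h *: x).
Proof.
apply: (@eq_from_nth _ 0).
  by rewrite size_set_nth !size_rows; apply/esym/maxn_idPr; exact: ltn_ord.
move=> i; rewrite size_rows => ilt.
rewrite nth_set_nth /= -[i]/(val (Ordinal ilt)) !nth_rows linearD linearZ /=.
rewrite row_single_row; have -> : (i == k :> nat) = (Ordinal ilt == k) by [].
by case: eqP => [->|_]; rewrite ?scaler0 ?add0r // addrC.
Qed.

End RowMatrices.

Section CyclicProducts.
Variables (R : realType) (m : nat) (mul : 'rV[R]_m -> 'rV[R]_m -> 'rV[R]_m)
  (one : 'rV[R]_m) (form : 'rV[R]_m -> 'rV[R]_m -> R).
Hypothesis hF : frobenius_setting mul one form.

Lemma formn_single_row n (G : 'M[R]_(n, m)) k x :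
  formn form G (single_row k x) = form (row k G) x.
Proof.
rewrite /formn (bigD1 k) //= row_single_row eqxx big1 ?addr0 // => i ik.
by rewrite row_single_row (negbTE ik) (iformC hF) (iform0l hF).
Qed.

Lemma formn_grad n (f : 'M[R]_(n, m) -> R^o) U : differentiable f U ->
  forall X, formn form (grad (formn form) f U) X = 'D_X f U.
Proof.
move=> df; apply: gradP.
pose l (X : 'M[R]_(n, m)) : R^o := 'd f U X.
have hl : linear l by move=> a x y; rewrite /l linearP.
exists (\matrix_(i, j) (riesz form (fun x => l (single_row i x))) 0 j) => X.
rewrite deriveE // -/(l X) /formn -[X in l X]sum_single_row (linear_fun_sum _ _ hl).
apply: eq_bigr => k _; rewrite (_ : row k _ = riesz form (fun x => l (single_row k x))).
  by rewrite (rieszP hF) // => a x y; rewrite single_rowP hl.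
by apply/rowP => j; rewrite !mxE.
Qed.

Definition d_row n (Phi : 'M[R]_(n, m) -> R) U j :=
  mul (row j U) (row j (grad (formn form) Phi U)).
Definition d'_row n (Phi : 'M[R]_(n, m) -> R) U j :=
  mul (row j (grad (formn form) Phi U)) (row j U).

Lemma iform_d_row n (Phi : 'M[R]_(n, m) -> R^o) U k Z : differentiable Phi U ->
  form (d_row Phi U k) Z = 'D_(single_row k (mul Z (row k U))) Phi U.
Proof.
by move=> dPhi; rewrite (iformC hF) -(iform_mul hF) (iformC hF) -formn_single_row formn_grad.
Qed.

Lemma iform_d'_row n (Phi : 'M[R]_(n, m) -> R^o) U k Z : differentiable Phi U ->
  form (d'_row Phi U k) Z = 'D_(single_row k (mul (row k U) Z)) Phi U.
Proof. by move=> dPhi; rewrite (iform_mul hF) -formn_single_row formn_grad. Qed.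

(* rprod [:: x_0; ...; x_k] = x_k ... x_0, the order of Mprod. *)
Definition rprod (s : seq 'rV[R]_m) : 'rV[R]_m := foldr (fun x acc => mul acc x) one s.

Lemma Mprod_rows n (V : 'M[R]_(n, m)) : Mprod mul one V = rprod (rows V).
Proof. by rewrite /Mprod /rprod /rows foldr_map. Qed.

Lemma rprod_cat s1 s2 : rprod (s1 ++ s2) = mul (rprod s2) (rprod s1).
Proof. by elim: s1 => [|x s IH] /=; rewrite ?(amul1r hF) // IH (amulA hF). Qed.

Lemma rprod_shift_factor (s : seq 'rV[R]_m) i h Z : (i.+1 < size s)%N ->
  rprod (set_nth 0 s i (nth 0 s i + h *: mul Z (nth 0 s i))) =
  rprod (set_nth 0 s i.+1 (nth 0 s i.+1 + h *: mul (nth 0 s i.+1) Z)).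
Proof.
elim: s i => [|x s IH] [|i] //=; last by move=> hi; rewrite IH.
case: s {IH} => [|y t] //= _.
by rewrite !(amulDr hF) !(amulZr hF) !(amulDl hF) !(amulZl hF) !(amulA hF).
Qed.

Lemma rprod_perturb_last (s : seq 'rV[R]_m) h Z : s != [::] ->
  rprod (set_nth 0 s (size s).-1 (nth 0 s (size s).-1 + h *: mul Z (nth 0 s (size s).-1))) =
  rprod s + h *: mul Z (rprod s).
Proof.
elim: s => [//|x [|y t] IH] _ /=; first by rewrite !(amul1l hF).
by rewrite IH // (amulDl hF) (amulZl hF) (amulA hF).
Qed.

Lemma rprod_perturb_first (s : seq 'rV[R]_m) h Z : s != [::] ->
  rprod (set_nth 0 s 0 (nth 0 s 0 + h *: mul (nth 0 s 0) Z)) =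
  rprod s + h *: mul (rprod s) Z.
Proof. by case: s => [//|x t] _ /=; rewrite (amulDr hF) (amulZr hF) (amulA hF). Qed.

End CyclicProducts.

Section CyclicHamiltonians.
Variables (R : realType) (m : nat) (mul : 'rV[R]_m -> 'rV[R]_m -> 'rV[R]_m)
  (one : 'rV[R]_m) (form : 'rV[R]_m -> 'rV[R]_m -> R).
Hypothesis hF : frobenius_setting mul one form.

Definition phiM n (phi : 'rV[R]_m -> R) r (V : 'M[R]_(n, m)) : R :=
  phi (Mprod mul one (iter r (@sigma R n m) V)).

Lemma phiM_differentiable n phi r (U : 'M[R]_(n, m)) :
  Ck 1 phi -> differentiable (phiM phi r : _ -> R^o) U.
Proof.
move=> c1; have -> : (phiM phi r : _ -> R^o) = (phi : _ -> R^o) \o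
   ((fun W : 'M[R]_(n, m) => foldr (fun k acc => mul acc (row k W)) one (enum 'I_n))
     \o iter r (@sigma R n m)) by [].
apply: differentiable_comp; last exact: Ck1_differentiable.
apply: differentiable_comp; last exact: (foldr_amul_rows_differentiable hF).
exact: linear_mx_differentiable (@iter_sigmaP R n m r).
Qed.

Lemma phiM_perturb_row n phi r (U : 'M[R]_(n, m)) (i k : 'I_n) F h :
  iter r (@ordS n) i = k ->
  let s := rows (iter r (@sigma R n m) U) in
  phiM phi r (h *: single_row k (F (row k U)) + U) =
  phi (rprod mul one (set_nth 0 s i (nth 0 s i + h *: F (nth 0 s i)))).
Proof.
move=> ik s; have si : nth 0 s i = row k U by rewrite nth_rows row_iter_sigma ik.
rewrite /phiM iter_sigmaP (iter_sigma_single_row _ ik) (Mprod_rows mul one).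
by rewrite rows_single_row si row_iter_sigma ik.
Qed.

Variables (n' : nat) (phi : 'rV[R]_m -> R) (J : 'I_n'.+1) (U : 'M[R]_(n'.+1, m)).
Hypothesis c1 : Ck 1 phi.
Local Notation Phi := (phiM phi J.+1).
Local Notation T := (Mprod mul one (iter J.+1 (@sigma R n'.+1 m) U)).

Lemma iter_ordS_max : iter J.+1 (@ordS n'.+1) ord_max = J.
Proof. by apply: val_inj; rewrite val_iter_ordS /= -addSnnS addnC modnDr modn_small. Qed.

Lemma iter_ordS_0 : iter J.+1 (@ordS n'.+1) ord0 = ordS J.
Proof. by apply: val_inj; rewrite val_iter_ordS. Qed.

Lemma d'_row_succ j : j != J -> d'_row mul form Phi U (ordS j) = d_row mul form Phi U j.
Proof.
move=> jJ; apply: (iform_inj hF) => Z.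
have dPhi := phiM_differentiable J.+1 U c1.
rewrite (iform_d'_row hF _ _ dPhi) (iform_d_row hF _ _ dPhi).
pose i := iter J.+1 (@ord_pred n'.+1) j.
have ij : iter J.+1 (@ordS n'.+1) i = j by apply: iter_ordS_pred.
have iSj : iter J.+1 (@ordS n'.+1) (ordS i) = ordS j by rewrite -iterSr iterS ij.
have iN : (i.+1 < n'.+1)%N.
  rewrite ltnS ltn_neqAle -ltnS ltn_ord andbT; apply: contra jJ => /eqP iN.
  by rewrite -ij (_ : i = ord_max) ?iter_ordS_max //; apply: val_inj.
apply: derive_line_ext => h.
rewrite (phiM_perturb_row phi U (fun u => mul u Z) h iSj).
rewrite (phiM_perturb_row phi U (mul Z) h ij).
by rewrite [val (ordS i)]/= modn_small // (rprod_shift_factor hF) // size_rows.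
Qed.

Lemma d_row_last : d_row mul form Phi U J = mul T (grad form phi T).
Proof.
apply: (iform_inj hF) => Z.
rewrite (iform_d_row hF _ _ (phiM_differentiable J.+1 U c1)).
rewrite -(iform_mulC hF) (iform_grad hF _ c1); apply: derive_line_ext => h.
rewrite (phiM_perturb_row phi U (mul Z) h iter_ordS_max).
have -> : nat_of_ord (@ord_max n') = (size (rows (iter J.+1 (@sigma R n'.+1 m) U))).-1.
  by rewrite size_rows.
by rewrite (rprod_perturb_last hF) -?size_eq0 ?size_rows // (Mprod_rows mul one) addrC.
Qed.

Lemma d'_row_first : d'_row mul form Phi U (ordS J) = mul (grad form phi T) T.
Proof.
apply: (iform_inj hF) => Z.
rewrite (iform_d'_row hF _ _ (phiM_differentiable J.+1 U c1)).
rewrite (iform_mul hF) (iform_grad hF _ c1); apply: derive_line_ext => h.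
rewrite (phiM_perturb_row phi U (fun u => mul u Z) h iter_ordS_0).
by rewrite (rprod_perturb_first hF) -?size_eq0 ?size_rows // (Mprod_rows mul one) addrC.
Qed.

End CyclicHamiltonians.

Section BracketCollapse.
Variables (R : realType) (m : nat) (mul : 'rV[R]_m -> 'rV[R]_m -> 'rV[R]_m)
  (one : 'rV[R]_m) (form : 'rV[R]_m -> 'rV[R]_m -> R).
Hypothesis hF : frobenius_setting mul one form.
Variables (n : nat) (A B C D : 'I_n -> 'I_n -> 'rV[R]_m -> 'rV[R]_m).
Hypothesis offdiag : forall i j : 'I_n, i != j ->
  forall x, A (ordS i) (ordS j) x = - B (ordS i) j x
         /\ - B (ordS i) j x = C i (ordS j) x
         /\ C i (ordS j) x = - D i j x.
Hypothesis diag : forall (j : 'I_n) x,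
  A (ordS j) (ordS j) x - D j j x + B (ordS j) j x - C j (ordS j) x = 0.

Lemma offdiagA i j x : i != j -> A (ordS i) (ordS j) x = - B (ordS i) j x.
Proof. by move=> ij; case: (offdiag ij x). Qed.
Lemma offdiagC i j x : i != j -> C i (ordS j) x = - B (ordS i) j x.
Proof. by move=> ij; case: (offdiag ij x) => _ [-> _]. Qed.
Lemma offdiagD i j x : i != j -> D i j x = B (ordS i) j x.
Proof. by move=> ij; case: (offdiag ij x) => _ [e1 e2]; apply: oppr_inj; rewrite -e2 -e1. Qed.

Lemma diag_form j x y :
  form (A (ordS j) (ordS j) x) y - form (D j j x) y + form (B (ordS j) j x) y
  - form (C j (ordS j) x) y = 0.
Proof.
have := congr1 (fun z => form z y) (diag j x).
by rewrite /= !(iformBl hF) (iformDl hF) !(iformBl hF) (iform0l hF).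
Qed.

Lemma double_sum_split4 (F1 F2 F3 F4 : 'I_n -> 'I_n -> R) :
  \sum_(i < n) \sum_(j < n) (F1 i j - F2 i j + F3 i j - F4 i j) =
  \sum_(i < n) \sum_(j < n) F1 i j - \sum_(i < n) \sum_(j < n) F2 i j
  + \sum_(i < n) \sum_(j < n) F3 i j - \sum_(i < n) \sum_(j < n) F4 i j.
Proof.
under eq_bigr do rewrite sumrB big_split sumrB.
by rewrite sumrB big_split sumrB.
Qed.

Lemma double_sum_reindex (F : 'I_n -> 'I_n -> R) (f g : 'I_n -> 'I_n) :
  injective f -> injective g ->
  \sum_(i < n) \sum_(j < n) F i j = \sum_(i < n) \sum_(j < n) F (f i) (g j).
Proof.
move=> fi gi; rewrite (reindex_inj fi); apply: eq_bigr => i _.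
by rewrite (reindex_inj gi).
Qed.

(* Shift both indices of the A-terms, the row index of the B-terms and the
   column index of the C-terms: then every term with (i, j) <> (J, J) cancels
   by (i) or (ii). *)
Lemma bracket_sum_collapse (X Y X' Y' : 'I_n -> 'rV[R]_m) (J : 'I_n) :
  (forall j, j != J -> Y (ordS j) = X j) -> (forall j, j != J -> Y' (ordS j) = X' j) ->
  \sum_(i < n) \sum_(j < n)
    (form (A i j (Y j)) (Y' i) - form (D i j (X j)) (X' i)
     + form (B i j (X j)) (Y' i) - form (C i j (Y j)) (X' i))
  = form (A (ordS J) (ordS J) (Y (ordS J))) (Y' (ordS J)) - form (D J J (X J)) (X' J)
    + form (B (ordS J) J (X J)) (Y' (ordS J)) - form (C J (ordS J) (Y (ordS J))) (X' J).
Proof.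
move=> hY hY'.
rewrite (double_sum_split4 (fun i j => form (A i j (Y j)) (Y' i))
  (fun i j => form (D i j (X j)) (X' i)) (fun i j => form (B i j (X j)) (Y' i))
  (fun i j => form (C i j (Y j)) (X' i))).
rewrite (double_sum_reindex (fun i j => form (A i j (Y j)) (Y' i)) (@ordS_inj n) (@ordS_inj n)).
rewrite (double_sum_reindex (fun i j => form (B i j (X j)) (Y' i)) (@ordS_inj n) (@inj_id _)).
rewrite (double_sum_reindex (fun i j => form (C i j (Y j)) (X' i)) (@inj_id _) (@ordS_inj n)).
rewrite -double_sum_split4.
pose T i j := form (A (ordS i) (ordS j) (Y (ordS j))) (Y' (ordS i)) - form (D i j (X j)) (X' i)
     + form (B (ordS i) j (X j)) (Y' (ordS i)) - form (C i (ordS j) (Y (ordS j))) (X' i).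
have Tz i j : (i != J) || (j != J) -> T i j = 0.
  rewrite /T; have [ij|ij] := eqVneq i j.
    by subst j; rewrite orbb => iJ; rewrite hY // hY' // diag_form.
  move=> iJ; rewrite (offdiagA _ ij) (offdiagC _ ij) (offdiagD _ ij) !(iformNl hF).
  have [jJ|jJ] := eqVneq j J; last by rewrite hY //; ring.
  by move: iJ; rewrite jJ eqxx orbF => iJ; rewrite hY' //; ring.
transitivity (\sum_(i < n) \sum_(j < n) T i j); first by [].
rewrite (bigD1 J) //= (bigD1 J) //= big1 ?addr0; last by move=> j jJ; rewrite Tz // jJ orbT.
by rewrite big1 ?addr0 // => i iJ; apply: big1 => j _; rewrite Tz // iJ.
Qed.

Lemma bracket_sum_formn (X Y : 'I_n -> 'rV[R]_m) (U G : 'M[R]_(n, m)) :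
  (forall j, Y (ordS j) = X j) ->
  let L j := A (ordS j) (ordS j) (X j) + B (ordS j) j (X j) in
  \sum_(i < n) \sum_(j < n)
    (form (A i j (Y j)) (mul (row i G) (row i U)) - form (D i j (X j)) (mul (row i U) (row i G))
     + form (B i j (X j)) (mul (row i G) (row i U)) - form (C i j (Y j)) (mul (row i U) (row i G)))
  = formn form G (\matrix_(j < n, l < m) (mul (row j U) (L (ord_pred j)) - mul (L j) (row j U)) 0 l).
Proof.
move=> hY L; rewrite /formn; apply: eq_bigr => i _.
set e' := mul (row i G) (row i U); set e := mul (row i U) (row i G).
have -> : row i (\matrix_(j < n, l < m) (mul (row j U) (L (ord_pred j)) - mul (L j) (row j U)) 0 l)
   = mul (row i U) (L (ord_pred i)) - mul (L i) (row i U) by apply/rowP => l; rewrite !mxE.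
rewrite (iformBr hF) -(iform_mul hF) (iform_mulC hF) -/e' -/e (iformC hF e') (iformC hF e).
have SA : \sum_(j < n) form (A i j (Y j)) e' + \sum_(j < n) form (B i j (X j)) e'
    = form (L (ord_pred i)) e'.
  rewrite (reindex_inj (@ordS_inj n)) /= -big_split /=.
  under eq_bigr do rewrite hY.
  have ip : i = ordS (ord_pred i) by rewrite ord_predK.
  rewrite (bigD1 (ord_pred i)) //= big1 ?addr0; first by rewrite /L -ip (iformDl hF).
  move=> j jp; rewrite [in A i _]ip [in B i _]ip.
  have pj : ord_pred i != j by rewrite eq_sym.
  by rewrite (offdiagA _ pj) (iformNl hF) addNr.
have SD : \sum_(j < n) form (D i j (X j)) e + \sum_(j < n) form (C i j (Y j)) e
    = form (L i) e.
  rewrite [X in _ + X](reindex_inj (@ordS_inj n)) /= -big_split /=.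
  under eq_bigr do rewrite hY.
  rewrite (bigD1 i) //= big1 ?addr0.
    by have := diag_form i (X i) e; rewrite /L (iformDl hF); lra.
  move=> j ji; have ij : i != j by rewrite eq_sym.
  by rewrite (offdiagD _ ij) (offdiagC _ ij) (iformNl hF) addrN.
rewrite (_ : \sum_(j < n) _ = \sum_(j < n) form (A i j (Y j)) e' - \sum_(j < n) form (D i j (X j)) e
   + \sum_(j < n) form (B i j (X j)) e' - \sum_(j < n) form (C i j (Y j)) e); last first.
  by rewrite -sumrB -big_split -sumrB.
rewrite -SA -SD; lra.
Qed.

End BracketCollapse.

Lemma poly_nonroot_near0 (R : realType) (p : {poly R}) :
  p != 0 -> \forall t \near (0 : R)^', ~~ root p t.
Proof.
move=> p0; have [k [q q0 pE]] := multiplicity_XsubC p 0; rewrite p0 /= in q0.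
have q00 : 0 < `|q.[0]| by rewrite normr_gt0.
have /cvgrPdist_lt/(_ _ q00)/nbhs_ballP[d d0 qd] := @continuous_horner R q 0.
near=> t.
have t0 : t != 0 by near: t; exact: nbhs_dnbhs_neq.
have td : `|t| < d by near: t; exact: dnbhs0_lt.
have qt : q.[t] != 0.
  apply/eqP => qt0; have : `|q.[0] - q.[t]| < `|q.[0]|.
    by apply: qd; rewrite -ball_normE /= sub0r normrN.
  by rewrite qt0 subr0 ltxx.
by rewrite /root pE hornerM horner_exp hornerXsubC subr0 mulf_eq0 negb_or qt expf_neq0.
Unshelve. all: by end_near.
Qed.

Section AdInvariance.
Variables (R : realType) (m : nat) (mul : 'rV[R]_m -> 'rV[R]_m -> 'rV[R]_m)
  (one : 'rV[R]_m) (form : 'rV[R]_m -> 'rV[R]_m -> R).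
Hypothesis hF : frobenius_setting mul one form.

Definition lmul_mx (q : 'rV[R]_m) : 'M[R]_m := \matrix_(i, j) (mul q 'e_i) 0 j.

Lemma mul_lmul_mx q x : x *m lmul_mx q = mul q x.
Proof.
rewrite [RHS](_ : _ = mul q (\sum_(i < m) x 0 i *: 'e_i)); last by rewrite -row_sum_delta.
rewrite (linear_fun_sum _ _ (amulPr hF q)); apply/rowP => j; rewrite !mxE summxE.
by apply: eq_bigr => i _; rewrite (amulZr hF) !mxE.
Qed.

Lemma lmul_mx_unit_inverse a :
  lmul_mx a \in unitmx -> exists b, mul a b = one /\ mul b a = one.
Proof.
move=> ua; pose b := one *m invmx (lmul_mx a).
have ab : mul a b = one by rewrite -mul_lmul_mx /b mulmxKV.
have ub : lmul_mx b \in unitmx.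
  apply: trivial_left_kernel_unitmx => v; rewrite mul_lmul_mx => bv.
  by rewrite -(amul1l hF v) -ab -(amulA hF) bv (amul0r hF).
pose k := one *m invmx (lmul_mx b).
have bk : mul b k = one by rewrite -mul_lmul_mx /k mulmxKV.
exists b; split => //.
by have -> : a = k by rewrite -(amul1r hF a) -bk (amulA hF) ab (amul1l hF).
Qed.

Lemma near0_lmul_mx_unit q : \forall t \near (0 : R)^', lmul_mx (q - t *: one) \in unitmx.
Proof.
have lmulE (t : R) : lmul_mx (q - t *: one) = lmul_mx q - t%:M.
  apply/matrixP => i j; rewrite !mxE (amulBl hF) (amulZl hF) (amul1l hF) !mxE.
  by rewrite eq_sym mulr_natr.
have := poly_nonroot_near0 (monic_neq0 (char_poly_monic (lmul_mx q))).
apply: filter_app; near=> t; rewrite -eigenvalue_root_char lmulE.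
by rewrite /eigenvalue /eigenspace negbK kermx_eq0 row_free_unit.
Unshelve. all: by end_near.
Qed.

(* Conjugating by Q - t 1, invertible for small t <> 0, gives
   phi((Q - t 1) P) = phi(P (Q - t 1)); let t tend to 0. *)
Lemma Ad_invariant_mulC (phi : 'rV[R]_m -> R^o) : continuous phi ->
  Ad_invariant mul one phi -> forall P Q, phi (mul Q P) = phi (mul P Q).
Proof.
move=> pc hAd P Q.
pose g1 t := phi (mul Q P - t *: P); pose g2 t := phi (mul P Q - t *: P).
have g12 : \forall t \near (0 : R)^', g1 t = g2 t.
  move: (near0_lmul_mx_unit Q); apply: filter_app; near=> t.
  move=> /lmul_mx_unit_inverse[b [hb bh]].
  have := hAd (mul P (Q - t *: one)) (Q - t *: one) b hb bh.
  rewrite (amulA hF) -(amulA hF _ _ b) hb (amul1r hF) /g1 /g2.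
  by rewrite (amulBl hF) (amulBr hF) (amulZl hF) (amulZr hF) (amul1l hF) (amul1r hF).
have gc c : continuous (fun t : R => phi (c - t *: P)).
  move=> t; apply: continuous_comp; last exact: pc.
  by apply: cvgB; [exact: cvg_cst | exact: scalel_continuous].
have g1c : g1 t @[t --> (0 : R)^'] --> g1 0 by apply/continuous_withinNx; exact: gc.
have g2c : g2 t @[t --> (0 : R)^'] --> g2 0 by apply/continuous_withinNx; exact: gc.
have g21c : g2 t @[t --> (0 : R)^'] --> g1 0.
  by apply: cvg_trans g1c; apply: near_eq_cvg; near=> t; near: t.
have := cvg_lim (@Rhausdorff R) g21c; rewrite (cvg_lim (@Rhausdorff R) g2c).
by rewrite /g1 /g2 !scale0r !subr0 => ->.
Unshelve. all: by end_near.
Qed.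

Lemma Ad_invariant_grad_comm (phi : 'rV[R]_m -> R) : Ck 1 phi ->
  Ad_invariant mul one phi -> forall x, mul (grad form phi x) x = mul x (grad form phi x).
Proof.
move=> c1 hAd x; have [pc _ _] := c1.
apply: (iform_inj hF) => Z.
rewrite (iform_mul hF) -(iform_mulC hF) !(iform_grad hF _ c1).
apply: derive_line_ext => h.
have := Ad_invariant_mulC pc hAd (one + h *: Z) x.
by rewrite (amulDr hF) (amulZr hF) (amul1r hF) (amulDl hF) (amulZl hF) (amul1l hF) !(addrC x).
Qed.

Lemma Ad_invariant_Mprod_sigma n (phi : 'rV[R]_m -> R^o) : continuous phi ->
  Ad_invariant mul one phi ->
  forall W : 'M[R]_(n, m), phi (Mprod mul one (sigma W)) = phi (Mprod mul one W).
Proof.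
case: n => [|n] pc hAd W; first by congr (phi (Mprod _ _ _)); apply/matrixP => -[].
pose s := map (fun i => row (lift ord0 i) W) (enum 'I_n).
have e1 : Mprod mul one W = mul (rprod mul one s) (row 0 W).
  by rewrite (Mprod_rows mul one) /rows enum_ordSl /= -map_comp.
have e2 : Mprod mul one (sigma W) = mul (row 0 W) (rprod mul one s).
  rewrite (Mprod_rows mul one) /rows enum_ordSr map_rcons -cats1 (rprod_cat hF) /=.
  rewrite (amul1l hF) -map_comp.
  have -> : row ord_max (sigma W) = row 0 W.
    by apply/rowP => l; rewrite !mxE; congr (W _ l); apply: val_inj; rewrite /= modnn.
  congr (mul _ (rprod mul one _)); apply: eq_map => i /=.
  apply/rowP => l; rewrite !mxE; congr (W _ l); apply: val_inj => /=.
  by rewrite modn_small // ltnS.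
by rewrite e1 e2 Ad_invariant_mulC.
Qed.

Lemma Ad_invariant_Mprod_iter_sigma n (phi : 'rV[R]_m -> R^o) : continuous phi ->
  Ad_invariant mul one phi ->
  forall r (V : 'M[R]_(n, m)), phi (Mprod mul one (iter r (@sigma R n m) V)) = phi (Mprod mul one V).
Proof.
by move=> pc hAd; elim => [|r IH] V //=; rewrite Ad_invariant_Mprod_sigma.
Qed.

End AdInvariance.

Section CyclicPoissonMaps.
Variables (R : realType) (m : nat) (mul : 'rV[R]_m -> 'rV[R]_m -> 'rV[R]_m)
  (one : 'rV[R]_m) (form : 'rV[R]_m -> 'rV[R]_m -> R).
Hypothesis hF : frobenius_setting mul one form.
Variables (n' : nat) (A B C D : 'I_n'.+1 -> 'I_n'.+1 -> 'rV[R]_m -> 'rV[R]_m).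
Hypothesis offdiag : forall i j : 'I_n'.+1, i != j ->
  forall x, A (ordS i) (ordS j) x = - B (ordS i) j x
         /\ - B (ordS i) j x = C i (ordS j) x
         /\ C i (ordS j) x = - D i j x.
Hypothesis diag : forall (j : 'I_n'.+1) x,
  A (ordS j) (ordS j) x - D j j x + B (ordS j) j x - C j (ordS j) x = 0.
Local Notation T U j := (Mprod mul one (iter j.+1 (@sigma R n'.+1 m) U)).

Lemma PBn_phiM (j : 'I_n'.+1) phi psi U : Ck 1 phi -> Ck 1 psi ->
  PBn mul form A B C D (phiM mul one phi j.+1) (phiM mul one psi j.+1) U
  = PB mul form (A (ordS j) (ordS j)) (B (ordS j) j) (C j (ordS j)) (D j j) phi psi (T U j).
Proof.
move=> c1 c1'; rewrite /PBn /=.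
rewrite (bracket_sum_collapse hF offdiag diag (J := j)
  (X := d_row mul form (phiM mul one phi j.+1) U)
  (Y := d'_row mul form (phiM mul one phi j.+1) U)
  (X' := d_row mul form (phiM mul one psi j.+1) U)
  (Y' := d'_row mul form (phiM mul one psi j.+1) U)); last 2 first.
- by move=> k kj; apply: d'_row_succ.
- by move=> k kj; apply: d'_row_succ.
by rewrite !d_row_last // !d'_row_first.
Qed.

Lemma PBn_Mprod_Ad_invariant phi U (ell : 'M[R]_(n'.+1, m) -> R^o) :
  Ck 1 phi -> Ad_invariant mul one phi -> linear ell ->
  let L j := A (ordS j) (ordS j) (mul (T U j) (grad form phi (T U j)))
             + B (ordS j) j (mul (T U j) (grad form phi (T U j))) in
  PBn mul form A B C D (fun V => phi (Mprod mul one V)) ell U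
  = ell (\matrix_(j < n'.+1, l < m) (mul (row j U) (L (ord_pred j)) - mul (L j) (row j U)) 0 l).
Proof.
move=> c1 hAd hell L; have [pc _ _] := c1.
set Phi := fun V => phi (Mprod mul one V).
have PhiE (j : 'I_n'.+1) : Phi = phiM mul one phi j.+1.
  by apply: funext => V; rewrite /phiM (Ad_invariant_Mprod_iter_sigma hF).
have dE j : d_row mul form Phi U j = mul (T U j) (grad form phi (T U j)).
  by rewrite (PhiE j) d_row_last.
have d'E j : d'_row mul form Phi U (ordS j) = d_row mul form Phi U j.
  by rewrite (PhiE j) d'_row_first // d_row_last // (Ad_invariant_grad_comm hF).
have gradE Z : formn form (grad (formn form) ell U) Z = ell Z.
  by rewrite (formn_grad hF (linear_mx_differentiable U hell)) linear_mx_derive.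
rewrite /PBn /= (bracket_sum_formn hF offdiag diag (X := d_row mul form Phi U)
  (Y := d'_row mul form Phi U)) // gradE.
by congr (ell _); apply/matrixP => a b; rewrite !mxE /L !dE.
Qed.

End CyclicPoissonMaps.
Theorem theorem1 (R : realType) (m n : nat) (hn : (0 < n)%N)
  (mul : 'rV[R]_m -> 'rV[R]_m -> 'rV[R]_m) (one : 'rV[R]_m)
  (form : 'rV[R]_m -> 'rV[R]_m -> R)
  (A B C D : 'I_n -> 'I_n -> {linear 'rV[R]_m -> 'rV[R]_m}) :
  frobenius_setting mul one form ->
  (forall i j, is_adjoint form (A i j) (fun x => - A j i x)) ->
  (forall i j, is_adjoint form (D i j) (fun x => - D j i x)) ->
  (forall i j, is_adjoint form (B i j) (C j i)) ->
  is_Poisson (PBn mul form (fun i j => A i j) (fun i j => B i j)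
                (fun i j => C i j) (fun i j => D i j)) ->
  (* (i) *)
  (forall i j : 'I_n, i != j ->
     forall x, A (ordS i) (ordS j) x = - B (ordS i) j x
            /\ - B (ordS i) j x = C i (ordS j) x
            /\ C i (ordS j) x = - D i j x) ->
  (* (ii) *)
  (forall j : 'I_n, forall x,
     A (ordS j) (ordS j) x - D j j x + B (ordS j) j x - C j (ordS j) x = 0) ->
  (* (1): ordinal j stands for the paper's index j+1, ordS j for j+2 *)
  (forall (j : 'I_n) (phi psi : 'rV[R]_m -> R),
     smooth phi -> smooth psi ->
     forall U : 'M[R]_(n, m),
       PBn mul form (fun i k => A i k) (fun i k => B i k)
           (fun i k => C i k) (fun i k => D i k)
           (fun V => phi (Mprod mul one (iter j.+1 (@sigma R n m) V)))
           (fun V => psi (Mprod mul one (iter j.+1 (@sigma R n m) V))) U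
       = PB mul form (A (ordS j) (ordS j)) (B (ordS j) j) (C j (ordS j)) (D j j)
           phi psi (Mprod mul one (iter j.+1 (@sigma R n m) U)))
  /\
  (* (2) *)
  (forall phi : 'rV[R]_m -> R, smooth phi -> Ad_invariant mul one phi ->
     let T (U : 'M[R]_(n, m)) (j : 'I_n) := Mprod mul one (iter j.+1 (@sigma R n m) U) in
     let L (U : 'M[R]_(n, m)) (j : 'I_n) :=
       A (ordS j) (ordS j) (mul (T U j) (grad form phi (T U j)))
       + B (ordS j) j (mul (T U j) (grad form phi (T U j))) in
     forall (U : 'M[R]_(n, m)) (ell : 'M[R]_(n, m) -> R),
       (forall (a : R) X Y, ell (a *: X + Y) = a * ell X + ell Y) ->
       PBn mul form (fun i k => A i k) (fun i k => B i k)
           (fun i k => C i k) (fun i k => D i k)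
           (fun V => phi (Mprod mul one V)) ell U
       = ell (\matrix_(j < n, l < m)
                (mul (row j U) (L U (ord_pred j)) - mul (L U j) (row j U)) 0 l)).
Proof.
move=> hF _ _ _ _; case: n hn A B C D => [//|n'] _ A B C D offdiag diag.
split=> [j phi psi sphi spsi U | phi sphi hAd T L U ell hell].
  exact: (PBn_phiM hF offdiag diag j U (sphi 1%N) (spsi 1%N)).
exact: (PBn_Mprod_Ad_invariant hF offdiag diag U (sphi 1%N) hAd hell).
Qed.
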